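(* For each $K\in\mathbb{N}$ there exist an alphabet $\mathcal{A}$, a set $\mathcal{M}$ of $K$ probability measures on $\mathcal{A}^\infty$ and $\mu\in\mathcal{M}$ such that, if $w$ is the uniform prior on $\mathcal{M}$ and $\xi$ the corresponding Bayes mixture, then $\mathbb{E}_\mu C_\infty>\frac12\ln^2K-1$.
   Context: $\mathcal{A}^\infty$ carries the $\sigma$-algebra generated by cylinders $\Gamma_x=\{x\omega\}$; for a measure $\rho$, $\rho(x):=\rho(\Gamma_x)$, $\rho(y|x):=\rho(xy)/\rho(x)$. Bayes mixture: $\xi(A):=\sum_{\nu\in\mathcal{M}}w_\nu\nu(A)$ with $w_\nu=1/K$; posterior $w_\nu(x):=w_\nu\nu(x)/\xi(x)$. Logarithms are natural. For a finite string $x$, $d_x(\nu,\xi):=\sum_{a}\nu(a|x)\ln\frac{\nu(a|x)}{\xi(a|x)}$. For $\omega\in\mathcal{A}^\infty$, $c_t(\omega):=\sum_{\nu\in\mathcal{M}}w_\nu(\omega_{<t})\,d_{\omega_{<t}}(\nu,\xi)$ and $C_\infty:=\sum_{t\ge1}c_t$. *)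

From HB Require Import structures.
From mathcomp Require Import all_boot all_order all_algebra.
From mathcomp Require Import all_classical all_reals all_analysis.
Unset Printing Implicit Defensive.
Import Order.TTheory GRing.Theory Num.Theory.
Import numFieldNormedType.Exports.
Local Open Scope classical_set_scope.
Local Open Scope ring_scope.

(* The space A^oo of infinite sequences over a (finite, nonempty) alphabet A;
   a0 is only used to give the type its (required) pointed structure. *)
Definition seqspace {A : finType} (a0 : A) : Type := nat -> A.
HB.instance Definition _ (A : finType) (a0 : A) :=
  Choice.on (seqspace a0).
HB.instance Definition _ (A : finType) (a0 : A) :=
  isPointed.Build (seqspace a0) (fun _ => a0).

Definition cyl {A : finType} (a0 : A) (x : seq A) : set (seqspace a0) :=
  [set w | forall i, (i < size x)%N -> w i = nth a0 x i].

Definition cylinders {A : finType} (a0 : A) : set (set (seqspace a0)) :=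
  [set C | exists x : seq A, C = cyl a0 x].

Definition Ainf {A : finType} (a0 : A) := g_sigma_algebraType (cylinders a0).

(* The first n letters omega_{<n+1} of omega. *)
Definition prefix {A : finType} {a0 : A} (w : seqspace a0) (n : nat) : seq A :=
  [seq w i | i <- iota 0 n].

Section BayesDefs.
Context {R : realType} {A : finType} {a0 : A} {K : nat}
  (nu : 'I_K -> probability (Ainf a0) R).

Definition mcyl (i : 'I_K) (x : seq A) : R := fine (nu i (cyl a0 x)).

Definition wK : R := K%:R^-1.
Definition xi (x : seq A) : R := \sum_(i < K) wK * mcyl i x.

Definition ncond (i : 'I_K) (a : A) (x : seq A) : R :=
  mcyl i (rcons x a) / mcyl i x.
Definition xicond (a : A) (x : seq A) : R := xi (rcons x a) / xi x.

Definition post (i : 'I_K) (x : seq A) : R := wK * mcyl i x / xi x.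

Definition dKL (i : 'I_K) (x : seq A) : R :=
  \sum_(a : A) ncond i a x * ln (ncond i a x / xicond a x).

(* c_t(omega) for t = n+1, i.e. using omega_{<t} = prefix omega n *)
Definition cterm (n : nat) (w : seqspace a0) : R :=
  \sum_(i < K) post i (prefix w n) * dKL i (prefix w n).

Definition Cinf (w : seqspace a0) : \bar R :=
  (\sum_(0 <= n <oo) (cterm n w)%:E)%E.

End BayesDefs.

(* Take K point masses on A^oo = bool^oo, nu_i concentrated on the sequence
   that is [true] exactly at position i, and let mu = nu_(K-1).  For a mixture
   of point masses, c_t is the entropy of the predictive distribution
   xi( . | omega_<t), since the posterior sits uniformly on the M hypotheses
   consistent with omega_<t.  Along the sequence of mu, at time t <= K - 1
   there are M = K - t + 1 consistent hypotheses and exactly one of them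
   predicts [true], so c_t = ln M / M + (M - 1)/M ln (M / (M - 1)), which is at
   least (ln^2 M - ln^2 (M - 1)) / 2.  Summing telescopes to ln^2 K / 2, and
   E_mu C_oo is just C_oo along that one sequence. *)

From Pilot Require Import Defs.
From HB Require Import structures.
From mathcomp Require Import all_boot all_order all_algebra.
From mathcomp Require Import all_classical all_reals all_analysis.
From mathcomp Require Import measurable_realfun.
From mathcomp Require Import ring lra zify.
Import Order.TTheory GRing.Theory Num.Theory.
Local Open Scope ring_scope.
Local Open Scope classical_set_scope.

Local Notation prefix := Defs.prefix.

Section Prefixes.
Context {A : finType} {a0 : A}.
Implicit Types (w : seqspace a0) (x : seq A).

Lemma size_prefix w n : size (prefix w n) = n.
Proof. by rewrite size_map size_iota. Qed.

Lemma nth_prefix w n i : (i < n)%N -> nth a0 (prefix w n) i = w i.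
Proof. by move=> lt_in; rewrite (nth_map 0%N) ?size_iota // nth_iota. Qed.

Lemma prefixS w n : prefix w n.+1 = rcons (prefix w n) (w n).
Proof. by rewrite /prefix -addn1 iotaD map_cat /= cats1. Qed.

Lemma cyl_prefixE w x : cyl a0 x w <-> prefix w (size x) = x.
Proof.
split=> [wx | <- i].
- apply: (@eq_from_nth _ a0) => [|i]; rewrite size_prefix // => lt_ix.
  by rewrite nth_prefix // wx.
- by rewrite size_prefix => lt_in; rewrite nth_prefix.
Qed.

Lemma cyl_measurable x : measurable (cyl a0 x : set (Ainf a0)).
Proof. by apply: sub_sigma_algebra; exists x. Qed.

(* The preimage of a set under [prefix _ n] is a countable union of cylinders,
   indexed through the pickling of [seq A]. *)
Lemma measurable_fun_prefix d (T : measurableType d) (f : seq A -> T) n :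
  measurable_fun [set: Ainf a0] (fun w : Ainf a0 => f (@prefix _ a0 w n)).
Proof.
move=> _ B mB; rewrite setTI.
pose F k : set (Ainf a0) := if @unpickle (seq A) k is Some x then
  cyl a0 x `&` [set _ | size x = n /\ B (f x)] else set0.
have -> : (fun w : Ainf a0 => f (@prefix _ a0 w n)) @^-1` B = \bigcup_k F k.
  apply/seteqP; split=> w /=.
  - move=> Bw; exists (pickle (@prefix _ a0 w n)) => //; rewrite /F pickleK.
    by split; [apply/cyl_prefixE | ]; rewrite size_prefix.
  - case=> k _; rewrite /F; case: (unpickle k) => // x [/cyl_prefixE wx [<- Bx]].
    by rewrite wx.
apply: bigcupT_measurable => k; rewrite /F; case: (unpickle k) => [x|//].
have [Px|nPx] := pselect (size x = n /\ B (f x)).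
- rewrite (_ : [set _ | _] = setT) ?setIT; last by apply/seteqP; split.
  exact: cyl_measurable.
- by rewrite (_ : [set _ | _] = set0) ?setI0 //; apply/seteqP; split.
Qed.

Variable R : realType.

Definition dirac_prob w : probability (Ainf a0) R := \d_(w : Ainf a0).

Lemma dirac_prob_cyl w x :
  fine (dirac_prob w (cyl a0 x)) = (prefix w (size x) == x)%:R.
Proof.
rewrite /= indicE; have [/eqP wx | wx] := boolP (_ == _).
- by rewrite mem_set //; apply/cyl_prefixE.
- by rewrite memNset // => /cyl_prefixE/eqP; rewrite (negbTE wx).
Qed.

Lemma dirac_prob_inj : injective dirac_prob.
Proof.
move=> w w' eq_ww'; apply/funext => t.
have /eqP : prefix w' t.+1 == prefix w t.+1.
  have := dirac_prob_cyl w (prefix w t.+1).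
  rewrite eq_ww' dirac_prob_cyl size_prefix eqxx.
  by case: (_ == _) => // /esym/eqP; rewrite oner_eq0.
by rewrite !prefixS => /eqP; rewrite eqseq_rcons => /andP[_ /eqP].
Qed.

End Prefixes.

Section DiracMixture.
Context {R : realType} {A : finType} {a0 : A} {K : nat}.
Hypothesis K_gt0 : (0 < K)%N.
Variable s : 'I_K -> seqspace a0.
Implicit Types (x : seq A) (i : 'I_K).

Let nu i : probability (Ainf a0) R := dirac_prob R (s i).

Definition compatible i x := prefix (s i) (size x) == x.

Definition ncompatible x : R := \sum_i (compatible i x)%:R.

Lemma compatible_rcons i x a :
  compatible i (rcons x a) = compatible i x && (s i (size x) == a).
Proof. by rewrite /compatible size_rcons prefixS eqseq_rcons. Qed.

Lemma ncompatible_ge0 x : 0 <= ncompatible x.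
Proof. exact: sumr_ge0. Qed.

Lemma ncompatible_rcons_le x a : ncompatible (rcons x a) <= ncompatible x.
Proof.
apply: ler_sum => i _; rewrite compatible_rcons ler_nat.
by case: (compatible i x) => //=; apply: leq_b1.
Qed.

Lemma sum_compatible_next x (F : A -> R) :
  \sum_i (compatible i x)%:R * F (s i (size x)) =
  \sum_a ncompatible (rcons x a) * F a.
Proof.
have split_next i : (compatible i x)%:R * F (s i (size x)) =
    \sum_a (compatible i (rcons x a))%:R * F a.
  rewrite (bigD1 (s i (size x))) //= big1 => [|a /negbTE na].
    by rewrite addr0 compatible_rcons eqxx andbT.
  by rewrite compatible_rcons eq_sym na andbF mul0r.
under eq_bigr do rewrite split_next.
by rewrite exchange_big; apply: eq_bigr => a _; rewrite mulr_suml.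
Qed.

Lemma mcyl_dirac i x : mcyl nu i x = (compatible i x)%:R.
Proof. exact: dirac_prob_cyl. Qed.

Lemma xi_dirac x : xi nu x = @wK R K * ncompatible x.
Proof. by rewrite /xi mulr_sumr; apply: eq_bigr => i _; rewrite mcyl_dirac. Qed.

Lemma wK_neq0 : @wK R K != 0.
Proof. by rewrite /wK invr_eq0 pnatr_eq0 -lt0n. Qed.

Lemma xicond_dirac a x :
  xicond nu a x = ncompatible (rcons x a) / ncompatible x.
Proof. by rewrite /xicond !xi_dirac -mulf_div divff ?wK_neq0 ?mul1r. Qed.

Lemma post_dKL_dirac i x : post nu i x * dKL nu i x =
  (compatible i x)%:R / ncompatible x *
  ln (ncompatible x / ncompatible (rcons x (s i (size x)))).
Proof.
rewrite /post xi_dirac mcyl_dirac.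
have [ix|_] := boolP (compatible i x); last by rewrite !mulr0 !mul0r.
rewrite invfM mulrA mulr1 mulfV ?wK_neq0 // mul1r; congr (_ * _).
rewrite /dKL (bigD1 (s i (size x))) //= big1 ?addr0 => [|a na].
  rewrite /ncond xicond_dirac !mcyl_dirac compatible_rcons ix eqxx.
  by rewrite !divr1 !mul1r invf_div.
by rewrite /ncond !mcyl_dirac compatible_rcons ix eq_sym (negbTE na) !mul0r.
Qed.

Lemma cterm_dirac n (w : seqspace a0) : cterm nu n w =
  \sum_a xicond nu a (prefix w n) * ln (xicond nu a (prefix w n))^-1.
Proof.
rewrite /cterm; under eq_bigr do rewrite post_dKL_dirac mulrAC.
set x := prefix w n.
rewrite -mulr_suml (sum_compatible_next _ (fun a =>
  ln (ncompatible x / ncompatible (rcons x a)))) mulr_suml.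
apply: eq_bigr => a _.
by rewrite xicond_dirac invf_div mulrAC.
Qed.

Lemma xicond_dirac_ge0 a x : 0 <= xicond nu a x.
Proof. by rewrite xicond_dirac divr_ge0 ?ncompatible_ge0. Qed.

Lemma xicond_dirac_le1 a x : xicond nu a x <= 1.
Proof.
rewrite xicond_dirac; have [->|nz] := eqVneq (ncompatible x) 0.
  by rewrite invr0 mulr0.
rewrite ler_pdivrMr ?mul1r ?ncompatible_rcons_le //.
by rewrite lt_neqAle eq_sym nz ncompatible_ge0.
Qed.

Lemma cterm_dirac_ge0 n w : 0 <= cterm nu n w.
Proof.
rewrite cterm_dirac; apply: sumr_ge0 => a _.
have [->|p_neq0] := eqVneq (xicond nu a (prefix w n)) 0; first by rewrite mul0r.
apply: mulr_ge0; first exact: xicond_dirac_ge0.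
apply: ln_ge0; rewrite invf_ge1 ?xicond_dirac_le1 //.
by rewrite lt_neqAle eq_sym p_neq0 xicond_dirac_ge0.
Qed.

Lemma measurable_Cinf_dirac :
  measurable_fun [set: Ainf a0] (fun w : Ainf a0 => Cinf nu w).
Proof.
apply: ge0_emeasurable_sum => [k w _ _ | k _].
  by rewrite lee_fin cterm_dirac_ge0.
apply: measurableT_comp => //.
exact: (@measurable_fun_prefix _ a0 _ R
  (fun x => \sum_(i < K) post nu i x * dKL nu i x) k).
Qed.

End DiracMixture.

Section EntropyBound.
Variable R : realType.

Lemma ln_le_subr1 {x : R} : 0 < x -> ln x <= x - 1.
Proof.
by move=> x_gt0; have := @le_ln1Dx R (x - 1); rewrite subrKC; apply; lra.
Qed.

(* With L = ln M and d = ln (M / (M - 1)) the claim reads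
   L d - d^2 / 2 <= (L + (M - 1) d) / M; it follows from
   0 <= L <= M - 1, 0 <= d and (M - 1) d <= 1. *)
Lemma ln_sqr_increment_le (M : R) : 1 < M ->
  (ln M ^+ 2 - ln (M - 1) ^+ 2) / 2 <=
  M^-1 * ln M + (M - 1) / M * ln (M / (M - 1)).
Proof.
move=> M_gt1; have M_gt0 : 0 < M by lra.
have M1_gt0 : 0 < M - 1 by lra.
set L := ln M; set d := ln (M / (M - 1)).
have lnM1 : ln (M - 1) = L - d by rewrite /d /L ln_div ?posrE //; ring.
have L_ge0 : 0 <= L by apply: ln_ge0; lra.
have L_le : L <= M - 1 by exact: ln_le_subr1.
have d_ge0 : 0 <= d by apply: ln_ge0; rewrite ler_pdivlMr // mul1r; lra.
have d_le : (M - 1) * d <= 1.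
  have := ln_le_subr1 (divr_gt0 M_gt0 M1_gt0 : 0 < M / (M - 1)).
  rewrite -/d (_ : M / (M - 1) - 1 = (M - 1)^-1); last by field; lra.
  by rewrite -ler_pdivlMl // mulr1.
rewrite lnM1 (_ : M^-1 * L + _ = (L + (M - 1) * d) / M); last by field; lra.
rewrite ler_pdivlMr //; nra.
Qed.

End EntropyBound.

Section UnitSequences.
Variables (R : realType) (k : nat).

Definition unit_seq (i : nat) : seqspace false := fun t => t == i.

Lemma unit_seq_inj : injective unit_seq.
Proof.
by move=> i j /(congr1 (fun w => w i)); rewrite /unit_seq eqxx => /esym/eqP.
Qed.

Lemma prefix_unit_seq n i : (prefix (unit_seq i) n == nseq n false) = (n <= i)%N.
Proof.
rewrite -[X in nseq X _](size_prefix (unit_seq i) n) (sameP eqP (all_pred1P _ _)).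
rewrite all_map leqNgt (_ : (i < n)%N = (i \in iota 0 n)); last by rewrite mem_iota.
rewrite -has_pred1 -all_predC.
by apply: eq_all => t; rewrite /= /unit_seq eqbF_neg.
Qed.

Lemma sum_leq_nat N n : \sum_(i < N) (n <= i)%N%:R = (N - n)%:R :> R.
Proof.
elim: N => [|N IHN]; first by rewrite big_ord0 sub0n.
by rewrite big_ord_recr /= IHN -natrD; congr _%:R; lia.
Qed.

Lemma natrS_sub1 n : (n < k)%N -> (k.+1 - n)%:R - 1 = (k - n)%:R :> R.
Proof. by move=> n_lt_k; rewrite subSn ?(ltnW n_lt_k) // -natr1 addrK. Qed.

Let s (i : 'I_k.+1) := unit_seq i.
Let nu (i : 'I_k.+1) := dirac_prob R (s i).

Lemma prefix_unit_seq_eq n : (n <= k)%N -> prefix (unit_seq k) n = nseq n false.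
Proof. by move=> n_le_k; apply/eqP; rewrite prefix_unit_seq. Qed.

Lemma compatible_unit_prefix n i : (n <= k)%N ->
  compatible s i (prefix (unit_seq k) n) = (n <= i)%N.
Proof.
move=> n_le_k.
by rewrite /compatible size_prefix prefix_unit_seq_eq // prefix_unit_seq.
Qed.

Lemma ncompatible_unit_prefix n : (n <= k)%N ->
  ncompatible s (prefix (unit_seq k) n) = (k.+1 - n)%:R :> R.
Proof.
move=> n_le_k; rewrite -sum_leq_nat; apply: eq_bigr => i _.
by rewrite compatible_unit_prefix.
Qed.

Lemma ncompatible_unit_prefix_true n : (n <= k)%N ->
  ncompatible s (rcons (prefix (unit_seq k) n) true) = 1 :> R.
Proof.
move=> n_le_k; have n_lt : (n < k.+1)%N by [].
have compatible_true i :
    compatible s i (rcons (prefix (unit_seq k) n) true) = (i == Ordinal n_lt).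
  rewrite compatible_rcons compatible_unit_prefix // size_prefix /s /unit_seq.
  by rewrite eqb_id -val_eqE /= [(n == _)]eq_sym andb_idl // => /eqP ->.
rewrite /ncompatible (bigD1 (Ordinal n_lt)) ?compatible_true ?eqxx //=.
rewrite big1 ?addr0 // => i.
by rewrite compatible_true => /negbTE ->.
Qed.

Lemma ncompatible_unit_prefix_false n : (n < k)%N ->
  ncompatible s (rcons (prefix (unit_seq k) n) false) = (k - n)%:R :> R.
Proof.
move=> n_lt_k.
have -> : rcons (prefix (unit_seq k) n) false = prefix (unit_seq k) n.+1.
  by rewrite prefixS /unit_seq ltn_eqF.
by rewrite ncompatible_unit_prefix.
Qed.

Lemma cterm_unit_seq n (M := (k.+1 - n)%:R : R) : (n < k)%N ->
  cterm nu n (unit_seq k) = M^-1 * ln M + (M - 1) / M * ln (M / (M - 1)).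
Proof.
move=> n_lt_k; have M1 : M - 1 = (k - n)%:R by exact: natrS_sub1.
have n_le_k := ltnW n_lt_k.
rewrite cterm_dirac // big_bool /= !xicond_dirac // ncompatible_unit_prefix //.
rewrite ncompatible_unit_prefix_true // ncompatible_unit_prefix_false //.
by rewrite -/M -M1 div1r invrK invf_div.
Qed.

Lemma Cinf_unit_seq_ge :
  ((ln (k.+1%:R : R) ^+ 2 / 2)%:E <= Cinf nu (unit_seq k))%E.
Proof.
have partial_sum_le :=
  @nneseries_lim_ge R (fun n => (cterm nu n (unit_seq k))%:E) xpredT 0 k.
rewrite /Cinf; apply: (le_trans _ (partial_sum_le _)) => [|n _ _]; last first.
  by rewrite lee_fin cterm_dirac_ge0.
rewrite sumEFin lee_fin.
pose f n := - (ln ((k.+1 - n)%:R : R) ^+ 2) / 2.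
have -> : ln (k.+1%:R : R) ^+ 2 / 2 = f k - f 0.
  by rewrite /f subSn // subnn subn0 ln1 expr0n /=; lra.
rewrite -telescope_sumr // big_nat_cond [leRHS]big_nat_cond.
apply: ler_sum => n /andP[/andP[_ n_lt_k] _]; rewrite cterm_unit_seq //.
set M : R := (k.+1 - n)%:R.
have -> : f n.+1 - f n = (ln M ^+ 2 - ln (M - 1) ^+ 2) / 2.
  by rewrite /f subSS -natrS_sub1 //; field.
by apply: ln_sqr_increment_le; rewrite ltr1n; lia.
Qed.

End UnitSequences.

Theorem proposition2 (R : realType) (K : nat) (HK : (0 < K)%N) :
  exists (A : finType) (a0 : A) (nu : 'I_K -> probability (Ainf a0) R)
         (imu : 'I_K),
    injective nu /\
    (\int[nu imu]_w Cinf nu w > ((1 / 2) * (ln K%:R) ^+ 2 - 1)%:E)%E.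
Proof.
case: K HK => [//|k] K_gt0.
exists bool, false, (fun i => dirac_prob R (unit_seq i)), ord_max; split.
  by move=> i j /dirac_prob_inj /unit_seq_inj /val_inj.
rewrite /= /dirac_prob integral_dirac //; last exact: measurable_Cinf_dirac.
rewrite diracT mul1e; apply: (lt_le_trans _ (Cinf_unit_seq_ge R k)).
rewrite lte_fin; lra.
Qed.
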